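(* For all $x,y\in\{5,6,7,8\}$ (not necessarily distinct) there is a snark $G$ with a Hist $T$ such that $oc(G,T)$ is the multiset $\{x,y\}$.
   Context: A snark is a cyclically $4$-edge-connected cubic (3-regular) graph of girth at least $5$ that admits no proper $3$-edge-colouring. A Hist of a cubic graph $G$ is a spanning tree $T$ of $G$ with no vertex of degree two (so every vertex of $T$ has degree $1$ or $3$). Given a Hist $T$ of a cubic graph $G$, the edges of $G$ not in $T$ form vertex-disjoint cycles whose vertices are exactly the leaves of $T$; these are the outer cycles of $(G,T)$. If $C_1,\dots,C_k$ are all outer cycles, $oc(G,T)$ denotes the multiset $\{|V(C_1)|,\dots,|V(C_k)|\}$ of their lengths. *)

From mathcomp Require Import all_boot.
Set Implicit Arguments. Unset Strict Implicit. Unset Printing Implicit Defensive.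

Section Graphs.
Variable V : finType.

Definition simple_graph (e : rel V) : Prop :=
  symmetric e /\ irreflexive e.

Definition nbhd (e : rel V) (v : V) : {set V} := [set u | e v u].
Definition deg (e : rel V) (v : V) : nat := #|nbhd e v|.

Definition cubic (e : rel V) : Prop := forall v, deg e v = 3.

Definition is_cycle (e : rel V) (c : seq V) : Prop :=
  [/\ uniq c, 3 <= size c & cycle e c].

Definition has_cycle_in (e : rel V) (S : {set V}) : Prop :=
  exists c, is_cycle e c /\ {subset c <= S}.

Definition girth_ge5 (e : rel V) : Prop :=
  forall c, is_cycle e c -> 5 <= size c.

Definition cut (e : rel V) (S : {set V}) : {set V * V} :=
  [set p | [&& p.1 \in S, p.2 \notin S & e p.1 p.2]].

Definition cyc4_edge_connected (e : rel V) : Prop :=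
  forall S : {set V}, has_cycle_in e S -> has_cycle_in e (~: S) ->
    4 <= #|cut e S|.

Definition edge3colouring (e : rel V) (col : V -> V -> 'I_3) : Prop :=
  (forall u v, e u v -> col u v = col v u) /\
  (forall v u w, e v u -> e v w -> u != w -> col v u != col v w).

Definition three_edge_colourable (e : rel V) : Prop :=
  exists col, edge3colouring e col.

Definition snark (e : rel V) : Prop :=
  [/\ simple_graph e, cubic e, cyc4_edge_connected e, girth_ge5 e
    & ~ three_edge_colourable e].

Definition spanning_tree (e t : rel V) : Prop :=
  [/\ subrel t e, symmetric t, (forall u v, connect t u v)
    & forall c, ~ is_cycle t c].

(* Hist: spanning tree without vertices of degree 2 (all degrees 1 or 3) *)
Definition hist (e t : rel V) : Prop :=
  spanning_tree e t /\ forall v, (deg t v == 1) || (deg t v == 3).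

Definition cotree (e t : rel V) : rel V := fun u v => e u v && ~~ t u v.

Definition leaves (t : rel V) : {set V} := [set v | deg t v == 1].

(* outer cycles = connected components of the cotree graph on the leaves
   of T, each given by its vertex set *)
Definition outer_cycles (e t : rel V) : {set {set V}} :=
  [set [set w | connect (cotree e t) v w] | v in leaves t].

(* oc(G,T): multiset (as a sequence up to permutation) of outer cycle lengths *)
Definition oc (e t : rel V) : seq nat :=
  map (fun C : {set V} => #|C|) (enum (outer_cycles e t)).

End Graphs.

From mathcomp Require Import all_boot perm.
Set Implicit Arguments. Unset Strict Implicit. Unset Printing Implicit Defensive.

(* Each of the ten pairs x <= y is realised by an explicit cubic graph on at
   most 30 vertices together with a Hist given by parent pointers; the pairs
   x > y follow by symmetry. Every required property is decided by
   computation: degrees and girth by counting common neighbours, cyclic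
   4-edge-connectivity by enumerating vertex bipartitions (a branch is closed
   once four edges cross it, and a side with at most four vertices carries no
   cycle of length >= 5), non-colourability by backtracking over edge colours,
   the Hist by a depth function that decreases towards the root, and the
   outer cycles as the two cotree components of two given leaves. *)

Section FiniteGraph.
Variable V : finType.
Implicit Types (e t : rel V) (S : {set V}).

(** * Girth and edge cuts *)

Definition common_nbhd e u v : {set V} := nbhd e u :&: nbhd e v.

Lemma girth_ge5_common_nbhd e : symmetric e ->
  (forall u v, e u v -> common_nbhd e u v = set0) ->
  (forall u v, u != v -> #|common_nbhd e u v| <= 1) -> girth_ge5 e.
Proof.
move=> sym_e no_triangle no_square.
case=> [|a [|b [|c [|d [|? ?]]]]] [] //=.
- move=> _ _ /and4P[eab ebc eca _].
  have : c \in common_nbhd e a b by rewrite !inE sym_e eca ebc.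
  by rewrite no_triangle ?inE.
- rewrite !inE !negb_or -!andbA => /and5P[_ ac _ _ /andP[bd _]] _.
  move=> /and5P[eab ebc ecd eda _].
  have : [set b; d] \subset common_nbhd e a c.
    apply/subsetP => w; rewrite !inE => /orP[]/eqP->.
      by rewrite eab (sym_e c) ebc.
    by rewrite ecd (sym_e a) eda.
  by move/subset_leq_card; rewrite cards2 bd => /leq_trans/(_ (no_square _ _ ac)).
Qed.

Lemma has_cycle_in_card e S : girth_ge5 e -> has_cycle_in e S -> 5 <= #|S|.
Proof.
move=> girth_e [c [cyc_c sub_c]]; apply: leq_trans (girth_e _ cyc_c) _.
have [uniq_c _ _] := cyc_c; rewrite -(card_uniqP uniq_c).
by apply/subset_leq_card/subsetP.
Qed.

Definition crossing e (inS outS : seq V) : seq (V * V) :=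
  undup [seq p <- [seq (u, v) | u <- inS, v <- outS] | e p.1 p.2].

Lemma crossing_card e S inS outS : {subset inS <= S} -> {subset outS <= ~: S} ->
  size (crossing e inS outS) <= #|cut e S|.
Proof.
move=> inS_S outS_S; rewrite cardE; apply: uniq_leq_size; first exact: undup_uniq.
move=> [u v]; rewrite mem_undup mem_filter mem_enum inE /= => /andP[-> /allpairsP].
by case=> [[u' v'] /= [/inS_S uS /outS_S vS [-> ->]]]; rewrite uS -in_setC vS.
Qed.

(* The searches are written with [if] rather than [&&]: [vm_compute] evaluates
   arguments eagerly, so only [if] prunes. *)
Fixpoint cut_search e (todo inS outS : seq V) : bool :=
  if 3 < size (crossing e inS outS) then true else
  if todo is v :: todo' then
    if cut_search e todo' (v :: inS) outS then cut_search e todo' inS (v :: outS)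
    else false
  else (size inS <= 4) || (size outS <= 4).

Lemma card_le_size_cover (A : {pred V}) (s s' : seq V) :
  (forall v, v \in s ++ s') -> (forall v, v \in s' -> v \notin A) -> #|A| <= size s.
Proof.
move=> cover out; apply: leq_trans (card_size s); apply/subset_leq_card/subsetP => v vA.
by have := cover v; rewrite mem_cat => /orP[// | /out]; rewrite vA.
Qed.

Lemma cut_search_sound e S todo inS outS :
  {subset inS <= S} -> {subset outS <= ~: S} -> (forall v, v \in todo ++ inS ++ outS) ->
  cut_search e todo inS outS -> [\/ 3 < #|cut e S|, #|S| <= 4 | #|~: S| <= 4].
Proof.
elim: todo inS outS => [|v todo IH] inS outS inS_S outS_S cover /=.
all: case: ltnP => [big_cross _ | _];
  first by apply/Or31/(leq_trans big_cross (crossing_card _ inS_S outS_S)).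
- case/orP=> small; [apply: Or32 | apply: Or33]; apply: leq_trans small.
    by apply: (@card_le_size_cover _ inS outS) => // u /outS_S; rewrite inE.
  apply: (@card_le_size_cover _ outS inS) => [u | u /inS_S]; last by rewrite inE negbK.
  by rewrite mem_cat orbC -mem_cat cover.
- have cover' (u : V) : u \in todo ++ (v :: inS) ++ outS /\ u \in todo ++ inS ++ v :: outS.
    by move: (cover u); rewrite !(mem_cat, inE) => /or3P[/orP[]|| ] ->; rewrite ?orbT.
  case vS: (v \in S); case: ifP => // [inside outside].
  + apply: IH inside => [u | // | u]; last by case: (cover' u).
    by rewrite inE => /orP[/eqP-> // | /inS_S].
  + apply: IH outside => [// | u | u]; last by case: (cover' u).
    by rewrite inE => /orP[/eqP-> | /outS_S //]; rewrite inE vS.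
Qed.

(** * Edge 3-colourings *)

Definition flip (p : V * V) : V * V := (p.2, p.1).

Definition incident (p q : V * V) : bool :=
  [|| p.1 == q.1, p.1 == q.2, p.2 == q.1 | p.2 == q.2].

Lemma edge3colouring_neq e col p q : symmetric e -> edge3colouring e col ->
  e p.1 p.2 -> e q.1 q.2 -> incident p q -> p != q -> p != flip q ->
  col p.1 p.2 != col q.1 q.2.
Proof.
case: p q => [a b] [c d] sym_e [sym_col proper] /= eab ecd.
have eba : e b a by rewrite sym_e.
have edc : e d c by rewrite sym_e.
rewrite /flip /=; case/or4P=> /eqP /= eq_end; subst => neq neq_flip.
- by apply: proper => //; apply: contraNneq neq => ->.
- rewrite (sym_col c) //; apply: proper => //.
  by apply: contraNneq neq_flip => ->.
- rewrite (sym_col a) //; apply: proper => //.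
  by apply: contraNneq neq_flip => ->.
- rewrite (sym_col a) // (sym_col c) //; apply: proper => //.
  by apply: contraNneq neq => ->.
Qed.

Definition simple_edge_list (es : seq (V * V)) : bool :=
  uniq es && all (fun p => flip p \notin es) es.

Lemma perm_simple_edge_list es es' :
  perm_eq es es' -> simple_edge_list es = simple_edge_list es'.
Proof.
move=> pe; rewrite /simple_edge_list (perm_uniq pe) (perm_all _ pe).
by congr (_ && _); apply: eq_all => p; rewrite (perm_mem pe).
Qed.

Definition compatible (p : V * V) (k : 'I_3) (done : seq (V * V * 'I_3)) : bool :=
  all (fun d => ~~ incident p d.1 || (k != d.2)) done.

(* [enum 'I_3] does not reduce under [vm_compute]. *)
Definition colours : seq 'I_3 := [:: ord0; Ordinal (isT : 1 < 3); ord_max].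

Lemma mem_colours k : k \in colours.
Proof.
case: k => -[|[|[|//]]] lt3; rewrite !inE; apply/or3P.
- by constructor 1; apply/eqP/val_inj.
- by constructor 2; apply/eqP/val_inj.
- by constructor 3; apply/eqP/val_inj.
Qed.

Fixpoint colour_extendable (todo : seq (V * V)) (done : seq (V * V * 'I_3)) : bool :=
  if todo is p :: todo' then
    has (fun k => if compatible p k done then colour_extendable todo' ((p, k) :: done)
                  else false) colours
  else true.

Lemma colour_extendable_complete e col todo done :
  symmetric e -> edge3colouring e col ->
  all (fun p => e p.1 p.2) (todo ++ map fst done) ->
  simple_edge_list (todo ++ map fst done) ->
  (forall d, d \in done -> d.2 = col d.1.1 d.1.2) ->
  colour_extendable todo done.
Proof.
move=> sym_e colouring.
elim: todo done => [//|p todo IH] done /andP[edge_p edges] simple done_col.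
have /andP[/andP[new_p _] /andP[new_flip _]] := simple.
apply/hasP; exists (col p.1 p.2); first exact: mem_colours.
have -> : compatible p (col p.1 p.2) done.
  apply/allP=> d d_done; rewrite -implybE; apply/implyP=> pd.
  have d_edge : d.1 \in todo ++ map fst done by rewrite mem_cat map_f ?orbT.
  rewrite (done_col d d_done) (edge3colouring_neq sym_e colouring) //.
  - by move/allP: edges; apply.
  - by apply: contraNneq new_p => ->.
  - apply: contraNneq new_flip => ->.
    by rewrite /flip /= -surjective_pairing inE d_edge orbT.
have perm_moved :
    perm_eq (todo ++ map fst ((p, col p.1 p.2) :: done)) (p :: todo ++ map fst done).
  by rewrite /= -cat1s perm_catCA.
apply: IH => [||d].
- by rewrite (perm_all _ perm_moved) /= edge_p.
- by rewrite (perm_simple_edge_list perm_moved).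
- by rewrite inE => /orP[/eqP-> // | /done_col].
Qed.

Lemma edge3colouring_comp e col (f : 'I_3 -> 'I_3) :
  injective f -> edge3colouring e col -> edge3colouring e (fun u v => f (col u v)).
Proof.
move=> inj_f [sym_col proper]; split=> [u v euv | v u w evu evw uw].
  by rewrite sym_col.
by rewrite (inj_eq inj_f) proper.
Qed.

Lemma colour_permutation (a b : 'I_3) : a != b ->
  exists2 f : 'I_3 -> 'I_3, injective f & f a = ord0 /\ f b = ord_max.
Proof.
move=> ab; pose s1 := tperm a ord0; pose s2 := tperm (s1 b) ord_max.
have s1b : s1 b != ord0 by rewrite -(tpermL a ord0) (inj_eq (@perm_inj _ s1)) eq_sym.
exists (s2 \o s1); first exact: inj_comp (@perm_inj _ s2) (@perm_inj _ s1).
by rewrite /= tpermL tpermD // /s2 tpermL.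
Qed.

(* Up to a permutation of the colours, the incident edges [p] and [q] are
   coloured [ord0] and [ord_max]. *)
Lemma not_colourable_search e p q es :
  symmetric e -> all (fun p => e p.1 p.2) [:: p, q & es] ->
  simple_edge_list [:: p, q & es] -> incident p q ->
  ~~ colour_extendable es [:: (q, ord_max); (p, ord0)] -> ~ three_edge_colourable e.
Proof.
move=> sym_e edges simple pq no_ext [col colouring].
have /and3P[edge_p edge_q _] := edges.
have /andP[uniq_es /allP flip_es] := simple.
have p_q : p != q by move: uniq_es; rewrite /= inE negb_or -andbA => /andP[].
have p_flip : p != flip q.
  by have := flip_es q; rewrite !inE eqxx orbT negb_or eq_sym => /(_ isT) /andP[].
have pq_colours := edge3colouring_neq sym_e colouring edge_p edge_q pq p_q p_flip.
have [f inj_f [fp fq]] := colour_permutation pq_colours.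
have moved : perm_eq (es ++ map fst [:: (q, ord_max : 'I_3); (p, ord0)]) [:: p, q & es].
  by rewrite /= perm_catC (perm_catCA [:: q] [:: p] es).
have /negP := no_ext; apply.
apply: (colour_extendable_complete sym_e (edge3colouring_comp inj_f colouring)).
- by rewrite (perm_all _ moved).
- by rewrite (perm_simple_edge_list moved).
- by move=> d; rewrite !inE => /orP[]/eqP->.
Qed.

(** * Hists and outer cycles *)

Definition parent_tree (r : V) (p : V -> V) : rel V :=
  fun u v => (u != r) && (p u == v) || (v != r) && (p v == u).

Section ParentTree.
Variables (r : V) (p : V -> V) (depth : V -> nat).
Hypothesis depth_parent : forall u, u != r -> depth u = (depth (p u)).+1.
Local Notation t := (parent_tree r p).

Lemma parent_tree_sym : symmetric t.
Proof. by move=> u v; rewrite /parent_tree orbC. Qed.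

Lemma parent_tree_connect_root u : connect t u r.
Proof.
elim: {u}(depth u) {-2}u (erefl (depth u)) => [|k IH] u depth_u.
  by case: (eqVneq u r) => [-> // | /depth_parent]; rewrite depth_u.
case: (eqVneq u r) => [-> // | ur]; apply: connect_trans (IH (p u) _).
  by apply: connect1; rewrite /parent_tree ur eqxx.
by move: depth_u; rewrite depth_parent // => -[].
Qed.

Lemma parent_tree_connect u v : connect t u v.
Proof.
apply: connect_trans (parent_tree_connect_root u) _.
by rewrite (sym_connect_sym parent_tree_sym); apply: parent_tree_connect_root.
Qed.

(* A deepest vertex of a cycle would have both of its cycle neighbours as parent. *)
Lemma parent_tree_acyclic c : ~ is_cycle t c.
Proof.
case=> uniq_c size_c cycle_c.
have [x0 x0c] : exists x0, x0 \in c.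
  by case: c size_c {uniq_c cycle_c} => // x0 c _; exists x0; rewrite inE eqxx.
case: (arg_maxnP depth x0c) => x xc deepest.
have up (y : V) : y \in c -> t x y -> p x = y.
  move=> yc; case/orP=> /andP[yr /eqP pxy] //.
  by have := deepest y yc; rewrite /= (depth_parent yr) pxy ltnn.
case/rot_to: xc uniq_c size_c cycle_c => i [|y [|z l]] rot_c;
  rewrite -(rot_uniq i) -(size_rot i) -(rot_cycle i) rot_c //.
have in_c w : w \in [:: x, y, z & l] -> w \in c by rewrite -rot_c mem_rot.
move=> /and3P[_ y_out _] _; rewrite /= rcons_path => /and4P[txy _ _ tlx].
have y_c : y \in c by apply: in_c; rewrite !inE eqxx orbT.
have pxy := up y y_c txy.
have last_c : last z l \in c by apply: in_c; do 2!apply: mem_behead; apply: mem_last.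
have pxl := up _ last_c (etrans (parent_tree_sym _ _) tlx).
by move: y_out; rewrite -pxy pxl mem_last.
Qed.

Lemma parent_tree_hist e : symmetric e -> (forall u, u != r -> e u (p u)) ->
  (forall v, (deg t v == 1) || (deg t v == 3)) -> hist e t.
Proof.
move=> sym_e tree_edges degrees; split=> //; split.
- move=> u v /orP[]/andP[ur /eqP <-]; first exact: tree_edges.
  by rewrite sym_e; apply: tree_edges.
- exact: parent_tree_sym.
- exact: parent_tree_connect.
- exact: parent_tree_acyclic.
Qed.

End ParentTree.

Lemma cotree_sym e t : symmetric e -> symmetric t -> symmetric (cotree e t).
Proof. by move=> sym_e sym_t u v; rewrite /cotree sym_e sym_t. Qed.

Definition component (c : rel V) (v : V) : {set V} := [set w | connect c v w].

Lemma oc_two_cycles e t a b : symmetric (cotree e t) ->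
  a \in leaves t -> b \in leaves t -> ~~ connect (cotree e t) a b ->
  (forall v, v \in leaves t -> connect (cotree e t) a v || connect (cotree e t) b v) ->
  perm_eq (oc e t) [:: #|component (cotree e t) a|; #|component (cotree e t) b|].
Proof.
set c := cotree e t => sym_c leaf_a leaf_b not_ab cover.
have same v w : connect c v w -> component c v = component c w.
  by move=> vw; apply/setP => u; rewrite !inE (same_connect (sym_connect_sym sym_c) vw).
have outer : outer_cycles e t = [set component c a; component c b].
  apply/setP => C; rewrite !inE; apply/imsetP/orP => [[v leaf_v ->] | ].
    by case/orP: (cover v leaf_v) => /same ->; [left | right].
  by case=> /eqP ->; [exists a | exists b].
have ab : component c a != component c b.
  apply: contraNneq not_ab => eq_ab.
  have : b \in component c b by rewrite inE connect0.
  by rewrite -eq_ab inE.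
have enum_ab :
    perm_eq (enum [set component c a; component c b]) [:: component c a; component c b].
  apply: uniq_perm; rewrite ?enum_uniq //= ?inE ?ab // => C.
  by rewrite mem_enum !inE.
by rewrite /oc outer (perm_map _ enum_ab).
Qed.

Section Enumeration.
Variable vs : seq V.
Hypotheses (vs_uniq : uniq vs) (vs_full : forall v, v \in vs).

Lemma all_vsP (P : pred V) : reflect (forall v, P v) (all P vs).
Proof. by apply: (iffP allP) => [h v | h v _]; apply: h. Qed.

Lemma card_count (A : {pred V}) : #|A| = count [in A] vs.
Proof.
rewrite cardE -size_filter; apply/perm_size/uniq_perm; rewrite ?enum_uniq ?filter_uniq //.
by move=> v; rewrite mem_enum mem_filter vs_full andbT.
Qed.

Lemma deg_count e v : deg e v = count (e v) vs.
Proof. by rewrite /deg card_count; apply: eq_count => u; rewrite /= inE. Qed.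

Definition successors (c : rel V) (u : V) : seq V := [seq v <- vs | c u v].

Definition reach (c : rel V) (u : V) : seq V := dfs (successors c) (size vs) [::] u.

Lemma connect_reach c u v : connect c u v = (v \in reach c u).
Proof.
have succ : grel (successors c) =2 c by move=> x y; rewrite /= mem_filter vs_full andbT.
have card_V : #|V| = size vs by rewrite card_count count_predT.
rewrite /reach -card_V; apply/connectP/dfsP => -[q path_q ->]; exists q => //.
  by rewrite (eq_path succ).
by rewrite -(eq_path succ).
Qed.

Definition simple_graphb e : bool :=
  all (fun u => ~~ e u u && all (fun v => e u v == e v u) vs) vs.

Lemma simple_graphP e : reflect (simple_graph e) (simple_graphb e).
Proof.
apply: (iffP (all_vsP _)) => [h | [sym_e irr_e] u].
  split=> [u v | u]; first by have /andP[_ /allP/(_ v (vs_full v))/eqP] := h u.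
  by have /andP[/negbTE] := h u.
by rewrite irr_e; apply/allP => v _; rewrite sym_e.
Qed.

Definition cubicb e : bool := all (fun v => count (e v) vs == 3) vs.

Lemma cubicP e : reflect (cubic e) (cubicb e).
Proof.
apply: (iffP (all_vsP _)) => [h v | h v]; first by rewrite deg_count; apply/eqP.
by rewrite -deg_count h.
Qed.

Definition girth_ge5b e : bool :=
  all (fun u => all (fun v =>
    let common := count (fun w => e u w && e v w) vs in
    (e u v ==> (common == 0)) && ((u != v) ==> (common <= 1))) vs) vs.

Lemma girth_ge5_check e : symmetric e -> girth_ge5b e -> girth_ge5 e.
Proof.
move=> sym_e /all_vsP girth5.
have common_count u v : #|common_nbhd e u v| = count (fun w => e u w && e v w) vs.
  by rewrite card_count; apply: eq_count => w; rewrite !inE.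
apply: girth_ge5_common_nbhd => // u v.
  have /allP/(_ v (vs_full v))/andP[/implyP no_triangle _] := girth5 u.
  by move=> euv; apply/eqP; rewrite -cards_eq0 common_count no_triangle.
have /allP/(_ v (vs_full v))/andP[_ /implyP no_square] := girth5 u.
by move=> uv; rewrite common_count no_square.
Qed.

Lemma cyc4_edge_connected_search e :
  girth_ge5 e -> cut_search e vs [::] [::] -> cyc4_edge_connected e.
Proof.
move=> girth_e search S cycS cycCS.
have cover v : v \in vs ++ [::] ++ [::] by rewrite cat0s cats0.
have nil_sub (A : {pred V}) : {subset [::] <= A} by [].
have [//|smallS|smallCS] := cut_search_sound (nil_sub S) (nil_sub (~: S)) cover search.
- by have := leq_trans (has_cycle_in_card girth_e cycS) smallS.
by have := leq_trans (has_cycle_in_card girth_e cycCS) smallCS.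
Qed.

Definition edge_list e : seq (V * V) :=
  [seq p <- [seq (u, v) | u <- vs, v <- vs] | e p.1 p.2 && (index p.1 vs < index p.2 vs)].

Lemma edge_list_simple e : simple_edge_list (edge_list e).
Proof.
apply/andP; split.
  by apply/filter_uniq/allpairs_uniq => // -[? ?] [? ?] _ _ [-> ->].
apply/allP=> -[u v]; rewrite !mem_filter /= => /andP[/andP[_ uv] _].
by apply/negP=> /andP[/andP[_ vu] _]; move: (ltn_trans uv vu); rewrite ltnn.
Qed.

Definition uncolourableb e : bool :=
  if edge_list e is [:: p, q & es] then
    incident p q && ~~ colour_extendable es [:: (q, ord_max); (p, ord0)]
  else false.

Lemma uncolourable_check e : symmetric e -> uncolourableb e -> ~ three_edge_colourable e.
Proof.
move=> sym_e; rewrite /uncolourableb.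
have edges : all (fun p => e p.1 p.2) (edge_list e).
  by apply/allP=> p; rewrite mem_filter => /andP[/andP[]].
have := edge_list_simple e.
case: (edge_list e) edges => [|p [|q es]] // edges simple /andP[pq no_ext].
exact: not_colourable_search edges simple pq no_ext.
Qed.

Definition snarkb e : bool :=
  [&& simple_graphb e, cubicb e, girth_ge5b e, cut_search e vs [::] [::] & uncolourableb e].

Lemma snark_check e : snarkb e -> snark e.
Proof.
case/and5P=> /simple_graphP simple_e /cubicP cubic_e girth5 cuts colours.
have [sym_e _] := simple_e.
have girth_e := girth_ge5_check sym_e girth5.
split=> //; first exact: cyc4_edge_connected_search.
exact: uncolourable_check.
Qed.

(* Any function satisfying the recurrence of [parent_tree_hist] would do. *)
Definition depth_to (r : V) (p : V -> V) (u : V) : nat := index r (traject p u (size vs)).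

Definition histb e r p : bool :=
  [&& all (fun u => (u == r) || e u (p u)) vs,
      all (fun u => (u == r) || (depth_to r p u == (depth_to r p (p u)).+1)) vs &
      all (fun v => count (parent_tree r p v) vs \in [:: 1; 3]) vs].

Lemma hist_check e r p : symmetric e -> histb e r p -> hist e (parent_tree r p).
Proof.
move=> sym_e /and3P[/all_vsP edges /all_vsP depths /all_vsP degrees].
apply: (@parent_tree_hist r p (depth_to r p)) => // [u ur | u ur | v].
- by move: (depths u); rewrite (negbTE ur) => /eqP.
- by move: (edges u); rewrite (negbTE ur).
- by move: (degrees v); rewrite deg_count !inE.
Qed.

Definition ocb e t a b x y : bool :=
  let c := cotree e t in
  [&& count (t a) vs == 1, count (t b) vs == 1, b \notin reach c a,
      all (fun v => (count (t v) vs == 1) ==> (v \in reach c a) || (v \in reach c b)) vs,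
      count [in reach c a] vs == x & count [in reach c b] vs == y].

Lemma oc_check e t a b x y : symmetric e -> symmetric t -> ocb e t a b x y ->
  perm_eq (oc e t) [:: x; y].
Proof.
move=> sym_e sym_t /and5P[leaf_a leaf_b not_ab /all_vsP cover /andP[/eqP <- /eqP <-]].
have leafP v : (v \in leaves t) = (count (t v) vs == 1) by rewrite inE deg_count.
have card_component v : #|component (cotree e t) v| = count [in reach (cotree e t) v] vs.
  by rewrite card_count; apply: eq_count => w; rewrite /= inE connect_reach.
rewrite -!card_component; apply: oc_two_cycles; rewrite ?leafP ?connect_reach //.
  exact: cotree_sym.
by move=> v; rewrite leafP !connect_reach => /(implyP (cover v)).
Qed.

End Enumeration.

End FiniteGraph.

(** * Graphs given by adjacency tables *)

Section Ordinals.
Variable n : nat.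

(* Unlike [insub], which is blocked by the opaque [idP], this reduces under
   [vm_compute]. *)
Definition ord_of_nat (i : nat) : option 'I_n :=
  (if i < n as b return i < n = b -> option 'I_n then fun lt_i => Some (Ordinal lt_i)
   else fun _ => None) erefl.

Lemma ord_of_natK : pcancel (@nat_of_ord n) ord_of_nat.
Proof.
move=> v; rewrite /ord_of_nat; move: (erefl (val v < n)).
case: {2 3}(val v < n) => [lt_v|]; last by rewrite ltn_ord.
by congr Some; apply: val_inj.
Qed.

Lemma ord_of_nat_val : ocancel ord_of_nat (@nat_of_ord n).
Proof.
move=> i; rewrite /ord_of_nat; move: (erefl (i < n)).
by case: {2 3}(i < n).
Qed.

Definition ordinals : seq 'I_n := pmap ord_of_nat (iota 0 n).

Lemma ordinals_uniq : uniq ordinals.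
Proof. exact/(pmap_uniq ord_of_nat_val)/iota_uniq. Qed.

Lemma mem_ordinals v : v \in ordinals.
Proof. by rewrite (can2_mem_pmap ord_of_nat_val ord_of_natK) mem_iota /=. Qed.

End Ordinals.

Section TableGraph.
Variables (n : nat) (adj : seq (seq nat)) (parent : seq nat) (a b : nat).
Local Notation V := 'I_n.+1.

(* Vertex [i] is adjacent to the vertices listed in [nth [::] adj i] and has
   parent [nth 0 parent i] in a Hist rooted at 0; [a] and [b] are leaves on
   distinct outer cycles. *)
Definition table_graph : rel V := fun u v => nat_of_ord v \in nth [::] adj u.

Definition table_vertex (i : nat) : V := odflt ord0 (ord_of_nat n.+1 i).

Definition table_parent (u : V) : V := table_vertex (nth 0 parent u).

Definition table_tree : rel V := parent_tree ord0 table_parent.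

Definition table_certificate (x y : nat) : bool :=
  let vs := ordinals n.+1 in
  [&& snarkb vs table_graph, histb vs table_graph ord0 table_parent
    & ocb vs table_graph table_tree (table_vertex a) (table_vertex b) x y].

Lemma table_certificate_sound x y : table_certificate x y ->
  exists (V : finType) (e t : rel V), [/\ snark e, hist e t & perm_eq (oc e t) [:: x; y]].
Proof.
have vs_uniq := ordinals_uniq n.+1; have vs_full := @mem_ordinals n.+1.
case/and3P=> /(snark_check vs_uniq vs_full) snark_e hist_check_t oc_ok.
have [[sym_e _] _ _ _ _] := snark_e.
exists V, table_graph, table_tree; split => //.
  exact: (hist_check vs_uniq vs_full sym_e hist_check_t).
exact: (oc_check vs_uniq vs_full sym_e (@parent_tree_sym _ _ _) oc_ok).
Qed.

End TableGraph.

(** * The witnesses *)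

Definition snark55_adj : seq (seq nat) :=
  [:: [:: 1; 2; 3]; [:: 0; 6; 17]; [:: 0; 16; 14]; [:: 0; 4; 5]; [:: 3; 6; 7]; [:: 3; 17; 11];
     [:: 4; 1; 11]; [:: 4; 8; 9]; [:: 7; 14; 13]; [:: 7; 10; 11]; [:: 9; 12; 13]; [:: 9; 5; 6];
     [:: 10; 14; 15]; [:: 10; 16; 8]; [:: 12; 2; 8]; [:: 12; 16; 17]; [:: 15; 13; 2]; [:: 15; 1; 5]].
Definition snark55_parent : seq nat :=
  [:: 0; 0; 0; 0; 3; 3; 4; 4; 7; 7; 9; 9; 10; 10; 12; 12; 15; 15].

Lemma oc_snark55 : exists (V : finType) (e t : rel V),
  [/\ snark e, hist e t & perm_eq (oc e t) [:: 5; 5]].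
Proof.
by apply: (@table_certificate_sound 17 snark55_adj snark55_parent 6 13);
  vm_compute.
Qed.

Definition snark56_adj : seq (seq nat) :=
  [:: [:: 1; 2; 3]; [:: 0; 4; 5]; [:: 0; 6; 7]; [:: 0; 19; 16]; [:: 1; 14; 15]; [:: 1; 8; 9];
     [:: 2; 12; 13]; [:: 2; 10; 11]; [:: 5; 16; 17]; [:: 5; 19; 12]; [:: 7; 18; 14]; [:: 7; 13; 15];
     [:: 6; 16; 9]; [:: 6; 11; 14]; [:: 4; 10; 13]; [:: 4; 11; 18]; [:: 8; 3; 12]; [:: 8; 18; 19];
     [:: 17; 15; 10]; [:: 17; 9; 3]].
Definition snark56_parent : seq nat :=
  [:: 0; 0; 0; 0; 1; 1; 2; 2; 5; 5; 7; 7; 6; 6; 4; 4; 8; 8; 17; 17].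

Lemma oc_snark56 : exists (V : finType) (e t : rel V),
  [/\ snark e, hist e t & perm_eq (oc e t) [:: 5; 6]].
Proof.
by apply: (@table_certificate_sound 19 snark56_adj snark56_parent 9 13);
  vm_compute.
Qed.

Definition snark57_adj : seq (seq nat) :=
  [:: [:: 1; 2; 3]; [:: 0; 12; 13]; [:: 0; 4; 5]; [:: 0; 8; 9]; [:: 2; 6; 7]; [:: 2; 10; 17];
     [:: 4; 16; 17]; [:: 4; 10; 11]; [:: 3; 20; 18]; [:: 3; 14; 15]; [:: 7; 5; 19]; [:: 7; 17; 12];
     [:: 1; 11; 21]; [:: 1; 18; 15]; [:: 9; 18; 19]; [:: 9; 13; 20]; [:: 6; 20; 21]; [:: 6; 5; 11];
     [:: 14; 13; 8]; [:: 14; 21; 10]; [:: 16; 15; 8]; [:: 16; 12; 19]].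
Definition snark57_parent : seq nat :=
  [:: 0; 0; 0; 0; 2; 2; 4; 4; 3; 3; 7; 7; 1; 1; 9; 9; 6; 6; 14; 14; 16; 16].

Lemma oc_snark57 : exists (V : finType) (e t : rel V),
  [/\ snark e, hist e t & perm_eq (oc e t) [:: 5; 7]].
Proof.
by apply: (@table_certificate_sound 21 snark57_adj snark57_parent 18 10);
  vm_compute.
Qed.

Definition snark58_adj : seq (seq nat) :=
  [:: [:: 1; 2; 3]; [:: 0; 6; 7]; [:: 0; 8; 9]; [:: 0; 4; 5]; [:: 3; 20; 21]; [:: 3; 16; 7];
     [:: 1; 10; 11]; [:: 1; 5; 21]; [:: 2; 18; 17]; [:: 2; 14; 15]; [:: 6; 19; 22]; [:: 6; 12; 13];
     [:: 11; 18; 19]; [:: 11; 22; 23]; [:: 9; 18; 20]; [:: 9; 16; 17]; [:: 15; 22; 5]; [:: 15; 8; 20];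
     [:: 12; 14; 8]; [:: 12; 23; 10]; [:: 4; 17; 14]; [:: 4; 7; 23]; [:: 13; 16; 10]; [:: 13; 21; 19]].
Definition snark58_parent : seq nat :=
  [:: 0; 0; 0; 0; 3; 3; 1; 1; 2; 2; 6; 6; 11; 11; 9; 9; 15; 15; 12; 12; 4; 4; 13; 13].

Lemma oc_snark58 : exists (V : finType) (e t : rel V),
  [/\ snark e, hist e t & perm_eq (oc e t) [:: 5; 8]].
Proof.
by apply: (@table_certificate_sound 23 snark58_adj snark58_parent 14 22);
  vm_compute.
Qed.

Definition snark66_adj : seq (seq nat) :=
  [:: [:: 1; 2; 3]; [:: 0; 18; 19]; [:: 0; 4; 5]; [:: 0; 8; 9]; [:: 2; 10; 11]; [:: 2; 6; 7];
     [:: 5; 15; 8]; [:: 5; 13; 17]; [:: 3; 17; 6]; [:: 3; 12; 13]; [:: 4; 16; 17]; [:: 4; 14; 15];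
     [:: 9; 20; 21]; [:: 9; 15; 7]; [:: 11; 19; 21]; [:: 11; 6; 13]; [:: 10; 18; 20]; [:: 10; 7; 8];
     [:: 1; 16; 21]; [:: 1; 20; 14]; [:: 12; 16; 19]; [:: 12; 14; 18]].
Definition snark66_parent : seq nat :=
  [:: 0; 0; 0; 0; 2; 2; 5; 5; 3; 3; 4; 4; 9; 9; 11; 11; 10; 10; 1; 1; 12; 12].

Lemma oc_snark66 : exists (V : finType) (e t : rel V),
  [/\ snark e, hist e t & perm_eq (oc e t) [:: 6; 6]].
Proof.
by apply: (@table_certificate_sound 21 snark66_adj snark66_parent 18 6);
  vm_compute.
Qed.

Definition snark67_adj : seq (seq nat) :=
  [:: [:: 1; 2; 3]; [:: 0; 10; 11]; [:: 0; 22; 23]; [:: 0; 4; 5]; [:: 3; 6; 7]; [:: 3; 8; 9];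
     [:: 4; 12; 10]; [:: 4; 15; 11]; [:: 5; 18; 19]; [:: 5; 12; 13]; [:: 1; 6; 20]; [:: 1; 7; 12];
     [:: 9; 6; 11]; [:: 9; 14; 15]; [:: 13; 16; 17]; [:: 13; 20; 7]; [:: 14; 20; 21]; [:: 14; 23; 18];
     [:: 8; 17; 22]; [:: 8; 23; 21]; [:: 16; 10; 15]; [:: 16; 22; 19]; [:: 2; 18; 21]; [:: 2; 19; 17]].
Definition snark67_parent : seq nat :=
  [:: 0; 0; 0; 0; 3; 3; 4; 4; 5; 5; 1; 1; 9; 9; 13; 13; 14; 14; 8; 8; 16; 16; 2; 2].

Lemma oc_snark67 : exists (V : finType) (e t : rel V),
  [/\ snark e, hist e t & perm_eq (oc e t) [:: 6; 7]].
Proof.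
by apply: (@table_certificate_sound 23 snark67_adj snark67_parent 19 12);
  vm_compute.
Qed.

Definition snark68_adj : seq (seq nat) :=
  [:: [:: 1; 2; 3]; [:: 0; 22; 15]; [:: 0; 4; 5]; [:: 0; 16; 17]; [:: 2; 6; 7]; [:: 2; 14; 15];
     [:: 4; 12; 13]; [:: 4; 8; 9]; [:: 7; 18; 19]; [:: 7; 10; 11]; [:: 9; 20; 21]; [:: 9; 19; 25];
     [:: 6; 21; 23]; [:: 6; 17; 24]; [:: 5; 22; 23]; [:: 5; 1; 16]; [:: 3; 20; 15]; [:: 3; 13; 21];
     [:: 8; 24; 25]; [:: 8; 20; 11]; [:: 10; 16; 19]; [:: 10; 17; 12]; [:: 14; 25; 1]; [:: 14; 12; 24];
     [:: 18; 23; 13]; [:: 18; 11; 22]].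
Definition snark68_parent : seq nat :=
  [:: 0; 0; 0; 0; 2; 2; 4; 4; 7; 7; 9; 9; 6; 6; 5; 5; 3; 3; 8; 8; 10; 10; 14; 14; 18; 18].

Lemma oc_snark68 : exists (V : finType) (e t : rel V),
  [/\ snark e, hist e t & perm_eq (oc e t) [:: 6; 8]].
Proof.
by apply: (@table_certificate_sound 25 snark68_adj snark68_parent 13 16);
  vm_compute.
Qed.

Definition snark77_adj : seq (seq nat) :=
  [:: [:: 1; 2; 3]; [:: 0; 6; 7]; [:: 0; 14; 15]; [:: 0; 4; 5]; [:: 3; 8; 9]; [:: 3; 12; 13];
     [:: 1; 12; 24]; [:: 1; 10; 11]; [:: 4; 12; 10]; [:: 4; 18; 19]; [:: 7; 13; 8]; [:: 7; 22; 17];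
     [:: 5; 8; 6]; [:: 5; 20; 10]; [:: 2; 22; 23]; [:: 2; 16; 17]; [:: 15; 22; 21]; [:: 15; 23; 11];
     [:: 9; 20; 21]; [:: 9; 24; 25]; [:: 18; 24; 13]; [:: 18; 16; 25]; [:: 14; 11; 16]; [:: 14; 25; 17];
     [:: 19; 6; 20]; [:: 19; 21; 23]].
Definition snark77_parent : seq nat :=
  [:: 0; 0; 0; 0; 3; 3; 1; 1; 4; 4; 7; 7; 5; 5; 2; 2; 15; 15; 9; 9; 18; 18; 14; 14; 19; 19].

Lemma oc_snark77 : exists (V : finType) (e t : rel V),
  [/\ snark e, hist e t & perm_eq (oc e t) [:: 7; 7]].
Proof.
by apply: (@table_certificate_sound 25 snark77_adj snark77_parent 8 11);
  vm_compute.
Qed.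

Definition snark78_adj : seq (seq nat) :=
  [:: [:: 1; 2; 3]; [:: 0; 4; 5]; [:: 0; 6; 7]; [:: 0; 25; 14]; [:: 1; 8; 9]; [:: 1; 16; 17];
     [:: 2; 24; 25]; [:: 2; 14; 15]; [:: 4; 12; 13]; [:: 4; 10; 11]; [:: 9; 20; 21]; [:: 9; 13; 26];
     [:: 8; 27; 23]; [:: 8; 11; 20]; [:: 7; 3; 26]; [:: 7; 20; 25]; [:: 5; 22; 23]; [:: 5; 18; 19];
     [:: 17; 24; 23]; [:: 17; 27; 22]; [:: 10; 13; 15]; [:: 10; 26; 27]; [:: 16; 19; 24]; [:: 16; 18; 12];
     [:: 6; 22; 18]; [:: 6; 15; 3]; [:: 21; 14; 11]; [:: 21; 12; 19]].
Definition snark78_parent : seq nat :=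
  [:: 0; 0; 0; 0; 1; 1; 2; 2; 4; 4; 9; 9; 8; 8; 7; 7; 5; 5; 17; 17; 10; 10; 16; 16; 6; 6; 21; 21].

Lemma oc_snark78 : exists (V : finType) (e t : rel V),
  [/\ snark e, hist e t & perm_eq (oc e t) [:: 7; 8]].
Proof.
by apply: (@table_certificate_sound 27 snark78_adj snark78_parent 12 11);
  vm_compute.
Qed.

Definition snark88_adj : seq (seq nat) :=
  [:: [:: 1; 2; 3]; [:: 0; 4; 5]; [:: 0; 6; 7]; [:: 0; 10; 11]; [:: 1; 17; 24]; [:: 1; 8; 9];
     [:: 2; 21; 11]; [:: 2; 12; 13]; [:: 5; 16; 17]; [:: 5; 14; 15]; [:: 3; 20; 21]; [:: 3; 6; 24];
     [:: 7; 26; 27]; [:: 7; 18; 19]; [:: 9; 28; 25]; [:: 9; 17; 29]; [:: 8; 28; 29]; [:: 8; 4; 15];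
     [:: 13; 27; 23]; [:: 13; 24; 25]; [:: 10; 22; 23]; [:: 10; 29; 6]; [:: 20; 25; 27]; [:: 20; 18; 26];
     [:: 19; 11; 4]; [:: 19; 22; 14]; [:: 12; 23; 28]; [:: 12; 22; 18]; [:: 16; 26; 14]; [:: 16; 15; 21]].
Definition snark88_parent : seq nat :=
  [:: 0; 0; 0; 0; 1; 1; 2; 2; 5; 5; 3; 3; 7; 7; 9; 9; 8; 8; 13; 13; 10; 10; 20; 20; 19; 19; 12; 12; 16; 16].

Lemma oc_snark88 : exists (V : finType) (e t : rel V),
  [/\ snark e, hist e t & perm_eq (oc e t) [:: 8; 8]].
Proof.
by apply: (@table_certificate_sound 29 snark88_adj snark88_parent 25 4);
  vm_compute.
Qed.

Unset Implicit Arguments.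

Theorem lemma4 (x y : nat) :
  x \in [:: 5; 6; 7; 8] -> y \in [:: 5; 6; 7; 8] ->
  exists (V : finType) (e t : rel V),
    [/\ snark e, hist e t & perm_eq (oc e t) [:: x; y]].
Proof.
wlog le_xy : x y / x <= y.
  move=> oc_le x_in y_in; case: (leqP x y) => [|/ltnW] xy; first exact: oc_le.
  have [V [e [t [snark_e hist_t oc_yx]]]] := oc_le y x xy y_in x_in.
  by exists V, e, t; split=> //; rewrite (perm_trans oc_yx) // (perm_catC [:: y] [:: x]).
rewrite !inE => /or4P[]/eqP def_x /or4P[]/eqP def_y; subst x y => //.
- exact: oc_snark55.
- exact: oc_snark56.
- exact: oc_snark57.
- exact: oc_snark58.
- exact: oc_snark66.
- exact: oc_snark67.
- exact: oc_snark68.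
- exact: oc_snark77.
- exact: oc_snark78.
- exact: oc_snark88.
Qed.
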